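(* Let $(v_i)_{i\in N}$ be a typical profile, let all agents report truthfully ($\hat v_i=v_i$), and let $b$ and $x$ be the bids and fractional allocation computed by the PRD Mechanism. Then for all agents $i\neq k$, $$fEM_{ik}:=\sum_{j\in M}\bar v_{ij}\,(x_{ij}-x_{kj})=\frac{1}{nC}\sum_{j\in M}\bar v_{ij}\big(\log b_{ij}-\log b_{kj}\big)\;\ge\;\frac{\delta^2}{4nC},$$ where $\bar v_{ij}=v_{ij}/\sum_{j'}v_{ij'}$.
   Context: Setting (random model). There are $n$ agents $N=\{1,\dots,n\}$ and $m$ items $M=\{1,\dots,m\}$. Agent $i$ has an additive valuation given by a vector $v_i\in[0,1]^m$, so $v_i(S)=\sum_{j\in S}v_{ij}$. For each item $j$, the vector $(v_{1j},\dots,v_{nj})$ is drawn from a joint distribution $\mathcal D$ on $[0,1]^n$, independently across items (values of different agents for the same item may be correlated). Let $\mu_i$ be the mean of the marginal distribution of agent $i$. Standing assumptions: there are constants $\mu_l>0$ and $\delta\in(0,1)$, independent of $n$ and $m$, such that $\mu_i\ge \mu_l$ for all $i$, and $\mathbb E\big[\,|v_{ij}/\mu_i-v_{kj}/\mu_k|\,\big]\ge\delta$ for all $i\ne k$. Typicality: for a fixed constant $\varepsilon\in(0,\delta/25)$, a profile $(v_i)_{i\in N}$ is typical if (T1) for all $i$, $\sum_j v_{ij}\in[(1-\varepsilon)m\mu_i,(1+\varepsilon)m\mu_i]$, and (T2) for all $i\neq k$, $\sum_j |v_{ij}/\mu_i-v_{kj}/\mu_k|\ge(1-\varepsilon)\delta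 m$. PRD Mechanism. Parameters: $l:=\delta/25$, $b_{\min}:=l/m$, $b_{\max}:=2/(\mu_l m)$, $c:=-\log(l/m)$, $C:=\log\big(2/(\mu_l l)\big)$ (natural logarithms). Each agent $i$ reports a vector $\hat v_i\in[0,1]^m$ with $\sum_j\hat v_{ij}>0$. Bid construction: let $\bar v_{ij}:=\hat v_{ij}/\sum_{j'}\hat v_{ij'}$; for $s\ge 0$ let $b_{ij}(s):=\min\{\max\{s\bar v_{ij},b_{\min}\},b_{\max}\}$ and $h_i(s):=\sum_j b_{ij}(s)$ (a continuous nondecreasing function with $h_i(0)=l<1$). If $\sup_{s\ge0}h_i(s)\ge1$, pick $s_i\ge0$ with $h_i(s_i)=1$ (a scale factor) and set $b_{ij}:=b_{ij}(s_i)$. Otherwise set $b_{ij}:=b_{\max}$ for every $j$ with $\hat v_{ij}>0$ and choose the remaining $b_{ij}\in[b_{\min},b_{\max}]$ arbitrarily so that $\sum_j b_{ij}=1$. Fractional allocation: $x_{ij}:=\frac{\log b_{ij}+c}{nC}+\frac{nC-\sum_{k\in N}(\log b_{kj}+c)}{n^2C}$ (so $x_{ij}\in[0,1]$ and $\sum_i x_{ij}=1$). Rounding: each item $j$ is independently assigned to exactly one agent, to agent $i$ with probability $x_{ij}$; $A_i$ denotes the set of items agent $i$ receives. *)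

From HB Require Import structures.
From mathcomp Require Import all_boot all_order all_algebra.
From mathcomp Require Import reals exp.
Set Implicit Arguments. Unset Strict Implicit. Unset Printing Implicit Defensive.
Import Order.TTheory GRing.Theory Num.Theory.
Local Open Scope ring_scope.

Section PRD.
Variable R : realType.
Variables (n m : nat).

Definition vbar (v : 'I_n -> 'I_m -> R) (i : 'I_n) (j : 'I_m) : R :=
  v i j / \sum_(j' < m) v i j'.

Definition prd_l (delta : R) : R := delta / 25.
Definition prd_bmin (delta : R) : R := prd_l delta / m%:R.
Definition prd_bmax (mul : R) : R := 2 / (mul * m%:R).
Definition prd_c (delta : R) : R := - ln (prd_l delta / m%:R).
Definition prd_C (delta mul : R) : R := ln (2 / (mul * prd_l delta)).

Definition bid_s (delta mul : R) (vhat : 'I_n -> 'I_m -> R) (i : 'I_n) (s : R)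
  (j : 'I_m) : R :=
  Num.min (Num.max (s * vbar vhat i j) (prd_bmin delta)) (prd_bmax mul).

Definition h_s (delta mul : R) (vhat : 'I_n -> 'I_m -> R) (i : 'I_n) (s : R) : R :=
  \sum_(j < m) bid_s delta mul vhat i s j.

(* sup_{s >= 0} h_i(s) >= 1, written literally via the definition of sup *)
Definition sup_h_ge1 (delta mul : R) (vhat : 'I_n -> 'I_m -> R) (i : 'I_n) : Prop :=
  forall e : R, 0 < e -> exists s : R, 0 <= s /\ 1 - e < h_s delta mul vhat i s.

(* b is a bid matrix that the PRD bid construction can output on reports vhat
   (the construction involves choices, so it is a relation) *)
Definition PRD_bids (delta mul : R) (vhat : 'I_n -> 'I_m -> R)
  (b : 'I_n -> 'I_m -> R) : Prop :=
  forall i : 'I_n,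
    (sup_h_ge1 delta mul vhat i /\
       exists s : R, 0 <= s /\ h_s delta mul vhat i s = 1 /\
         forall j, b i j = bid_s delta mul vhat i s j)
    \/
    (~ sup_h_ge1 delta mul vhat i /\
       (forall j, 0 < vhat i j -> b i j = prd_bmax mul) /\
       (forall j, prd_bmin delta <= b i j <= prd_bmax mul) /\
       \sum_(j < m) b i j = 1).

Definition prd_x (delta mul : R) (b : 'I_n -> 'I_m -> R) (i : 'I_n) (j : 'I_m) : R :=
  (ln (b i j) + prd_c delta) / (n%:R * prd_C delta mul)
  + (n%:R * prd_C delta mul - \sum_(k < n) (ln (b k j) + prd_c delta))
      / (n%:R ^+ 2 * prd_C delta mul).

Definition typical (mu : 'I_n -> R) (delta eps : R) (v : 'I_n -> 'I_m -> R) : Prop :=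
  (forall i : 'I_n,
     (1 - eps) * m%:R * mu i <= \sum_(j < m) v i j <= (1 + eps) * m%:R * mu i)
  /\
  (forall i k : 'I_n, i != k ->
     (1 - eps) * delta * m%:R <= \sum_(j < m) `|v i j / mu i - v k j / mu k|).

End PRD.

(* Truthful bids are a clipped rescaling [b_i = max (s_i vbar_i) b_min] of the
   normalized valuations, with [s_i <= 1], and the terms of the allocation that
   do not depend on the agent cancel in [x_ij - x_kj].  Clipping only lowers
   the weighted log-ratio, so [sum_j vbar_ij (ln b_ij - ln b_kj)] is at least
   the Kullback-Leibler divergence of [b_k] from [b_i], hence by Pinsker's
   inequality at least [|b_i - b_k|_1 ^ 2 / 2].  Typicality makes [vbar_i] and
   [vbar_k] about [delta] apart in L1, while each bid vector is within
   [2 delta / 25] of its normalized valuation; so [|b_i - b_k|_1 >= 18 delta / 25]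
   and [(18 / 25) ^ 2 / 2 >= 1 / 4]. *)

From HB Require Import structures.
From mathcomp Require Import all_boot all_order all_algebra.
From mathcomp Require Import classical_sets reals topology normed_module.
From mathcomp Require Import exp derive realfun.
From mathcomp Require Import ring lra.
Set Implicit Arguments.
Unset Strict Implicit.
Unset Printing Implicit Defensive.
Import Order.TTheory GRing.Theory Num.Theory.
Import numFieldNormedType.Exports.
Local Open Scope ring_scope.

Section PositiveHalfLine.
Variable R : realType.
Local Open Scope classical_set_scope.
Local Open Scope ring_scope.
Implicit Types (f df : R -> R) (t x c a b : R).

Lemma mvt_around1 f df t : 0 < t -> t != 1 ->
  (forall x, 0 < x -> is_derive x 1 f (df x)) ->
  exists2 c : R, 0 < c /\ 0 < (c - 1) * (t - 1) & f t - f 1 = df c * (t - 1).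
Proof.
move=> t0 t1 fd.
have mvt a b : 0 < a -> a < b ->
    exists2 c : R, a < c < b & f b - f a = df c * (b - a).
  move=> a0 ab.
  have fd' x : x \in `]a, b[ -> is_derive x 1 f (df x).
    by rewrite in_itv /= => /andP[ax _]; apply: fd; lra.
  have fc : {within `[a, b], continuous f}.
    apply: derivable_within_continuous => x; rewrite in_itv /= => /andP[ax _].
    by apply: ex_derive; apply: fd; lra.
  by have [c] := MVT ab fd' fc; rewrite in_itv /=; exists c.
case: (ltgtP t 1) t1 => [lt_t1|gt_t1|->] // _.
- have [c /andP[tc c1] e] := mvt t 1 t0 lt_t1.
  exists c; first by split; nra.
  by rewrite -[LHS]opprB e; ring.
- have [c /andP[c1 ct] e] := mvt 1 t ltr01 gt_t1.
  by exists c; first by split; nra.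
Qed.

Lemma root1_sign_of_ndecr f df t : f 1 = 0 -> 0 < t ->
  (forall x, 0 < x -> is_derive x 1 f (df x)) ->
  (forall x, 0 < x -> 0 <= df x) -> 0 <= (t - 1) * f t.
Proof.
move=> f1 t0 fd df0; have [->|t1] := eqVneq t 1; first by rewrite subrr mul0r.
have [c [c0 _] e] := mvt_around1 t0 t1 fd.
have -> : f t = df c * (t - 1) by rewrite -e f1 subr0.
by rewrite mulrCA -expr2 mulr_ge0 ?df0 ?sqr_ge0.
Qed.

Lemma ge0_of_min_at1 f df t : f 1 = 0 -> 0 < t ->
  (forall x, 0 < x -> is_derive x 1 f (df x)) ->
  (forall x, 0 < x -> 0 <= (x - 1) * df x) -> 0 <= f t.
Proof.
move=> f1 t0 fd df0; have [->|t1] := eqVneq t 1; first by rewrite f1.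
have [c [c0 ct] e] := mvt_around1 t0 t1 fd.
have -> : f t = df c * (t - 1) by rewrite -e f1 subr0.
by rewrite -(pmulr_rge0 _ ct) mulrACA -expr2 mulr_ge0 ?df0 ?sqr_ge0.
Qed.

End PositiveHalfLine.

Lemma ln_ge_1_subV {R : realType} (t : R) : 0 < t -> 1 - t^-1 <= ln t.
Proof.
move=> t0; have tV0 : 0 < t^-1 by rewrite invr_gt0.
have := @le_ln1Dx R (t^-1 - 1); rewrite addrCA subrr addr0 lnV ?posrE //; lra.
Qed.

Lemma pinsker_ln_ineq {R : realType} (t : R) : 0 < t ->
  3 * (t - 1) ^+ 2 <= 2 * (t + 2) * (t * ln t - t + 1).
Proof.
move=> t0; rewrite -subr_ge0.
pose g (x : R) := (4 * x + 4) * ln x - 8 * x + 8.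
pose h (x : R) := 2 * (x + 2) * (x * ln x - x + 1) - 3 * (x - 1) ^+ 2.
have g1 : g 1 = 0 by rewrite /g ln1; ring.
have h1 : h 1 = 0 by rewrite /h ln1; ring.
have dg (x : R) : 0 < x -> is_derive x 1 g (4 * ln x + 4 / x - 4).
  by move=> x0; have dln := is_derive1_ln x0; apply: is_derive_eq;
    rewrite /GRing.scale /=; field; lra.
have dh (x : R) : 0 < x -> is_derive x 1 h (g x).
  by move=> x0; have dln := is_derive1_ln x0; apply: is_derive_eq;
    rewrite /GRing.scale /= /g; field; lra.
have g_sign (x : R) : 0 < x -> 0 <= (x - 1) * g x.
  move=> x0; apply: (root1_sign_of_ndecr g1 x0 dg) => y y0.
  by have := ln_ge_1_subV y0; lra.
exact: (ge0_of_min_at1 h1 t0 dh g_sign).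
Qed.

Lemma kl_term_ge {R : realType} (x y : R) : 0 < x -> 0 < y ->
  3 * (x - y) ^+ 2 <= 2 * (x + 2 * y) * (x * (ln x - ln y) - x + y).
Proof.
move=> x0 y0; set t := x / y.
have t0 : 0 < t by rewrite divr_gt0.
have -> : ln x - ln y = ln t by rewrite ln_div ?posrE.
have -> : x = t * y by rewrite /t mulrVK // unitfE gt_eqF.
have := ler_wpM2r (sqr_ge0 y) (pinsker_ln_ineq t0).
set K := t * ln t - t + 1; move=> h.
have -> : 3 * (t * y - y) ^+ 2 = 3 * (t - 1) ^+ 2 * y ^+ 2 by ring.
by move: h; congr (_ <= _); rewrite /K; ring.
Qed.

(* Maximizing the left side over [L] gives back [kl_term_ge]; Pinsker's
   inequality takes for [L] the L1 distance. *)
Lemma kl_term_tangent {R : realType} (x y L : R) : 0 < x -> 0 < y ->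
  L * `|x - y| - L ^+ 2 * (x + 2 * y) / 6 <= x * (ln x - ln y) - x + y.
Proof.
move=> x0 y0; have := kl_term_ge x0 y0.
rewrite -(real_normK (num_real (x - y))).
set d := `|x - y|; set s := x + 2 * y; set K := _ - x + y.
have s0 : 0 < s by rewrite /s; lra.
move=> hK; rewrite -(ler_pM2l (mulr_gt0 (ltr0n R 6) s0)).
have := sqr_ge0 (3 * d - L * s).
have -> : 6%:R * s * (L * d - L ^+ 2 * s / 6) = 6 * s * L * d - L ^+ 2 * s ^+ 2.
  by field.
nra.
Qed.

Lemma pinsker {R : realType} (m : nat) (r q : 'I_m -> R) :
  (forall j, 0 < r j) -> (forall j, 0 < q j) ->
  \sum_j r j = 1 -> \sum_j q j = 1 ->
  (\sum_j `|r j - q j|) ^+ 2 / 2 <= \sum_j r j * (ln (r j) - ln (q j)).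
Proof.
move=> r0 q0 rsum qsum; set L := \sum_j `|r j - q j|.
have : \sum_j (L * `|r j - q j| - L ^+ 2 * (r j + 2 * q j) / 6)
    <= \sum_j (r j * (ln (r j) - ln (q j)) - r j + q j).
  by apply: ler_sum => j _; exact: kl_term_tangent.
rewrite !big_split /= !sumrN -mulr_sumr -mulr_suml -mulr_sumr.
rewrite big_split /= -mulr_sumr rsum qsum -/L.
lra.
Qed.

Lemma l1_triangle {R : realType} (m : nat) (f g h : 'I_m -> R) :
  \sum_j `|f j - h j| <= \sum_j `|f j - g j| + \sum_j `|g j - h j|.
Proof.
rewrite -big_split /=; apply: ler_sum => j _.
by rewrite (_ : f j - h j = (f j - g j) + (g j - h j)) ?ler_normD //; ring.
Qed.

Lemma l1_dist_rescale {R : realType} (m : nat) (u w : 'I_m -> R) (a a' c c' : R) :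
  (forall j, 0 <= u j) -> (forall j, 0 <= w j) ->
  \sum_j `|u j * a' - w j * c'|
    <= \sum_j `|u j * a - w j * c|
       + (\sum_j u j) * `|a - a'| + (\sum_j w j) * `|c - c'|.
Proof.
move=> u0 w0; rewrite !mulr_suml -!big_split /=; apply: ler_sum => j _.
have -> : u j * a' - w j * c' = (u j * a - w j * c) + u j * (a' - a) - w j * (c' - c).
  by ring.
apply: le_trans (ler_normB _ _) _; apply: lerD; last first.
  by rewrite normrM ger0_norm // distrC mulrC.
by apply: le_trans (ler_normD _ _) _; rewrite lerD2l normrM ger0_norm // distrC mulrC.
Qed.

Lemma renormalization_error {R : realType} (S M eps : R) : 0 < M -> 0 < S ->
  (1 - eps) * M <= S <= (1 + eps) * M -> S * `|S^-1 - M^-1| <= eps.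
Proof.
move=> M0 S0 /andP[lo hi].
have -> : S * `|S^-1 - M^-1| = `|1 - S / M|.
  rewrite -{1}(ger0_norm (ltW S0)) -normrM; congr `|_|.
  by field; rewrite !gt_eqF.
have q1 : S / M <= 1 + eps by rewrite ler_pdivrMr.
have q2 : 1 - eps <= S / M by rewrite ler_pdivlMr.
rewrite ler_norml; apply/andP; split; lra.
Qed.

Section ClippedScaling.
Variables (R : realType) (m : nat) (p : 'I_m -> R) (s beta : R).
Hypotheses (p_ge0 : forall j, 0 <= p j) (p_sum1 : \sum_j p j = 1).
Hypotheses (s_ge0 : 0 <= s) (beta_ge0 : 0 <= beta).
Hypothesis clip_sum1 : \sum_j Num.max (s * p j) beta = 1.

Lemma clip_scale_defect : 1 - s <= m%:R * beta.
Proof.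
have : \sum_j Num.max (s * p j) beta <= \sum_j (s * p j + beta).
  apply: ler_sum => j _; rewrite ge_max lerDl lerDr beta_ge0 /=.
  exact: mulr_ge0.
rewrite clip_sum1 big_split /= -mulr_sumr p_sum1 sumr_const card_ord mulr_natl.
lra.
Qed.

Lemma clip_scale_l1_le : s <= 1 ->
  \sum_j `|Num.max (s * p j) beta - p j| <= 2 * (m%:R * beta).
Proof.
move=> s_le1.
have term j : `|Num.max (s * p j) beta - p j|
    <= (1 - s) * p j + (Num.max (s * p j) beta - s * p j).
  have := p_ge0 j; have := le_max (s * p j) (s * p j) beta; rewrite lexx /=.
  rewrite ler_norml; nra.
apply: le_trans (ler_sum _ (fun j _ => term j)) _.
rewrite big_split /= sumrB -!mulr_sumr p_sum1 clip_sum1 !mulr1.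
have := clip_scale_defect; lra.
Qed.

End ClippedScaling.

Lemma max_mul_ln_ratio_le {R : realType} (a beta q : R) : 0 < beta -> beta <= q ->
  Num.max a beta * (ln (Num.max a beta) - ln q) <= a * (ln (Num.max a beta) - ln q).
Proof.
move=> beta0 bq; case: (leP beta a) => [//|ba].
have : ln beta - ln q <= 0 by rewrite subr_le0 ler_ln ?posrE //; exact: lt_le_trans bq.
nra.
Qed.

Section Normalization.
Variables (R : realType) (n m : nat) (v : 'I_n -> 'I_m -> R).

Lemma vbar_sum1 i : 0 < \sum_j v i j -> \sum_j vbar v i j = 1.
Proof. by move=> S0; rewrite -mulr_suml divff ?gt_eqF. Qed.

Lemma typical_vbar_l1_ge (mu : 'I_n -> R) (delta eps : R) i k :
  (0 < m)%N -> 0 < mu i -> 0 < mu k -> eps < 1 ->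
  (forall i j, 0 <= v i j) -> typical mu delta eps v -> i != k ->
  (1 - eps) * delta - 2 * eps <= \sum_j `|vbar v i j - vbar v k j|.
Proof.
move=> m0 mui muk eps1 v0 [T1 T2] ik.
have m_pos : 0 < m%:R :> R by rewrite ltr0n.
have Mi_gt0 : 0 < m%:R * mu i by rewrite mulr_gt0.
have Mk_gt0 : 0 < m%:R * mu k by rewrite mulr_gt0.
have [/andP[Si_lo Si_hi] /andP[Sk_lo Sk_hi]] := (T1 i, T1 k).
have Si_gt0 : 0 < \sum_j v i j.
  by apply: lt_le_trans Si_lo; rewrite -mulrA mulr_gt0 ?subr_gt0.
have Sk_gt0 : 0 < \sum_j v k j.
  by apply: lt_le_trans Sk_lo; rewrite -mulrA mulr_gt0 ?subr_gt0.
have ei : (\sum_j v i j) * `|(\sum_j v i j)^-1 - (m%:R * mu i)^-1| <= eps.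
  by apply: renormalization_error; rewrite // !mulrA Si_lo Si_hi.
have ek : (\sum_j v k j) * `|(\sum_j v k j)^-1 - (m%:R * mu k)^-1| <= eps.
  by apply: renormalization_error; rewrite // !mulrA Sk_lo Sk_hi.
have := l1_dist_rescale (\sum_j v i j)^-1 (m%:R * mu i)^-1
  (\sum_j v k j)^-1 (m%:R * mu k)^-1 (v0 i) (v0 k).
have -> : \sum_j `|v i j * (m%:R * mu i)^-1 - v k j * (m%:R * mu k)^-1|
    = m%:R^-1 * \sum_j `|v i j / mu i - v k j / mu k|.
  rewrite mulr_sumr; apply: eq_bigr => j _.
  rewrite -[m%:R^-1]ger0_norm ?invr_ge0 ?ltW // -normrM; congr `|_|.
  by field; rewrite !gt_eqF.
have : (1 - eps) * delta <= m%:R^-1 * \sum_j `|v i j / mu i - v k j / mu k|.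
  by rewrite ler_pdivlMl // mulrC T2.
rewrite /vbar; lra.
Qed.

End Normalization.

Lemma prd_C_gt0 {R : realType} (delta mul : R) :
  0 < mul <= 1 -> 0 < delta < 1 -> 0 < prd_C delta mul.
Proof.
move=> /andP[mul0 mul1] /andP[delta0 delta1]; rewrite /prd_C /prd_l ln_gt0 //.
by rewrite ltr_pdivlMr ?mulr_gt0 ?divr_gt0 //; nra.
Qed.

Lemma prd_x_sub {R : realType} (n m : nat) (delta mul : R)
    (b : 'I_n -> 'I_m -> R) i k j :
  prd_x delta mul b i j - prd_x delta mul b k j
    = (ln (b i j) - ln (b k j)) / (n%:R * prd_C delta mul).
Proof. by rewrite /prd_x; ring. Qed.

Section TruthfulBids.
Variables (R : realType) (n m : nat) (mu : 'I_n -> R) (mul delta eps : R).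
Variables (v b : 'I_n -> 'I_m -> R) (a : 'I_n).
Hypotheses (m_gt0 : (0 < m)%N) (mul_gt0 : 0 < mul) (mu_a : mul <= mu a <= 1).
Hypotheses (delta01 : 0 < delta < 1) (eps_small : 0 < eps < delta / 25).
Hypothesis v_a01 : forall j, 0 <= v a j <= 1.
Hypothesis T1_a :
  (1 - eps) * m%:R * mu a <= \sum_j v a j <= (1 + eps) * m%:R * mu a.

Local Notation S := (\sum_j v a j).
Local Notation bmin := (prd_bmin m delta).
Local Notation bmax := (prd_bmax m mul).

Let m_pos : 0 < m%:R :> R. Proof. by rewrite ltr0n. Qed.

Lemma row_sum_ge : 3 / 4 * (m%:R * mul) <= S.
Proof.
have /andP[lo _] := T1_a; apply: le_trans lo.
have : 3 / 4 * mul <= (1 - eps) * mu a.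
  have /andP[mul_le _] := mu_a; have /andP[_ eps_lt] := eps_small.
  have /andP[_ delta_lt1] := delta01.
  have : 0 <= (1 - eps) * (mu a - mul) by apply: mulr_ge0; lra.
  have : 0 <= (1 / 4 - eps) * mul by rewrite mulr_ge0 ?(ltW mul_gt0) //; lra.
  lra.
rewrite -(ler_pM2l m_pos); congr (_ <= _); ring.
Qed.

Let S_pos : 0 < S.
Proof. by apply: lt_le_trans row_sum_ge; rewrite mulr_gt0 ?mulr_gt0 //; lra. Qed.

Let bmax_pos : 0 < bmax.
Proof. by rewrite divr_gt0 ?mulr_gt0 //; lra. Qed.

Lemma bmax_mul_row_sum_ge : 3 / 2 <= bmax * S.
Proof.
rewrite /prd_bmax mulrAC ler_pdivlMr ?mulr_gt0 //.
by have := row_sum_ge; lra.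
Qed.

Lemma vbar_row_ge0 j : 0 <= vbar v a j.
Proof. by rewrite divr_ge0 ?(ltW S_pos) //; case/andP: (v_a01 j). Qed.

Lemma vbar_row_le j : 3 / 2 * vbar v a j <= bmax.
Proof.
have le_invS : vbar v a j <= S^-1.
  by rewrite ler_pdivrMr // mulVf ?gt_eqF //; case/andP: (v_a01 j).
apply: le_trans (_ : 3 / 2 * S^-1 <= _).
  by rewrite ler_pM2l //; lra.
by rewrite ler_pdivrMr // bmax_mul_row_sum_ge.
Qed.

Lemma prd_bmin_gt0 : 0 < bmin.
Proof. by rewrite !divr_gt0 //; case/andP: delta01. Qed.

Lemma prd_bmin_mulm : m%:R * bmin = prd_l delta.
Proof. by rewrite /prd_bmin mulrC mulfVK ?gt_eqF. Qed.

Lemma prd_bmin_le_bmax : bmin <= bmax.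
Proof.
have -> : bmax = (2 / mul) / m%:R by rewrite /prd_bmax invfM mulrA.
rewrite -(ler_pM2l m_pos) prd_bmin_mulm mulrC mulfVK ?gt_eqF //.
have /andP[mul_le mua_le1] := mu_a; have /andP[delta0 delta_lt1] := delta01.
have : 2 <= 2 / mul by rewrite ler_pdivlMr //; lra.
rewrite /prd_l; lra.
Qed.

(* At the scale factor [bmax * S], every bid is at least [bmax * v a j]. *)
Lemma sup_h_ge1_row : sup_h_ge1 delta mul v a.
Proof.
move=> e e0; exists (bmax * S); split.
  by rewrite mulr_ge0 ?ltW.
apply: lt_le_trans (_ : 1 - e < bmax * S) _.
  by have := bmax_mul_row_sum_ge; lra.
rewrite [X in X <= _]mulr_sumr; apply: ler_sum => j _; rewrite /bid_s.
have -> : bmax * S * vbar v a j = bmax * v a j by rewrite /vbar; field; rewrite gt_eqF.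
have /andP[vj0 vj1] := v_a01 j.
rewrite le_min le_max lexx /= -{2}[bmax]mulr1.
by rewrite ler_pM2l.
Qed.

Lemma scale_factor_le1 s : h_s delta mul v a s = 1 -> s <= 1.
Proof.
move=> hs; rewrite leNgt; apply/negP => s_gt1.
pose t := Num.min s (3 / 2).
have t_gt1 : 1 < t by rewrite lt_min s_gt1 /=; lra.
suff : t <= 1 by lra.
rewrite -hs -[t]mulr1 -(vbar_sum1 S_pos) mulr_sumr; apply: ler_sum => j _.
rewrite /bid_s le_min le_max; apply/andP; split.
  by apply/orP; left; rewrite ler_wpM2r ?vbar_row_ge0 // ge_min lexx.
apply: le_trans (vbar_row_le j); rewrite ler_wpM2r ?vbar_row_ge0 //.
by rewrite ge_min lexx orbT.
Qed.

Lemma bid_s_clip s j : 0 <= s -> s <= 1 ->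
  bid_s delta mul v a s j = Num.max (s * vbar v a j) bmin.
Proof.
move=> s0 s1; rewrite /bid_s min_l // ge_max prd_bmin_le_bmax andbT.
apply: le_trans (vbar_row_le j).
by rewrite ler_wpM2r ?vbar_row_ge0 //; lra.
Qed.

Hypothesis bids : PRD_bids delta mul v b.

Lemma PRD_bid_clip : exists s, [/\ 0 < s, s <= 1,
  forall j, b a j = Num.max (s * vbar v a j) bmin,
  \sum_j b a j = 1 &
  \sum_j `|b a j - vbar v a j| <= 2 * prd_l delta].
Proof.
case: (bids a) => [[_ [s [s0 [hs bE]]]] | [no_sup _]]; last first.
  by case: (no_sup sup_h_ge1_row).
have s1 := scale_factor_le1 hs.
have bclip j : b a j = Num.max (s * vbar v a j) bmin by rewrite bE bid_s_clip.
have bsum : \sum_j b a j = 1 by rewrite -hs; apply: eq_bigr.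
have csum : \sum_j Num.max (s * vbar v a j) bmin = 1.
  by rewrite -bsum; apply: eq_bigr => j _; rewrite bclip.
have bmin0 := ltW prd_bmin_gt0.
have := clip_scale_defect vbar_row_ge0 (vbar_sum1 S_pos) s0 bmin0 csum.
have := clip_scale_l1_le vbar_row_ge0 (vbar_sum1 S_pos) s0 bmin0 csum s1.
rewrite prd_bmin_mulm (eq_bigr _ (fun j _ => congr1 (fun x => `|x - _|) (bclip j))).
have : prd_l delta < 1 by rewrite /prd_l; case/andP: delta01 => *; lra.
move=> l1 l1_le defect; exists s; split => //; lra.
Qed.

End TruthfulBids.

Lemma log_bid_ratio_ge {R : realType} (n m : nat) (mu : 'I_n -> R) (mul delta eps : R)
    (v b : 'I_n -> 'I_m -> R) i k :
  (0 < m)%N -> 0 < mul -> (forall i, mul <= mu i <= 1) -> 0 < delta < 1 ->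
  0 < eps < delta / 25 -> (forall i j, 0 <= v i j <= 1) ->
  typical mu delta eps v -> PRD_bids delta mul v b -> i != k ->
  delta ^+ 2 / 4 <= \sum_j vbar v i j * (ln (b i j) - ln (b k j)).
Proof.
move=> m0 mul0 hmu hd he hv typ bids ik.
have [T1 _] := typ.
have [s [s0 s1 bEi bsum_i near_i]] :=
  PRD_bid_clip m0 mul0 (hmu i) hd he (hv i) (T1 i) bids.
have [s' [_ _ bEk bsum_k near_k]] :=
  PRD_bid_clip m0 mul0 (hmu k) hd he (hv k) (T1 k) bids.
have bmin0 := prd_bmin_gt0 m0 hd.
have bi_ge j : prd_bmin m delta <= b i j by rewrite bEi le_max lexx orbT.
have bk_ge j : prd_bmin m delta <= b k j by rewrite bEk le_max lexx orbT.
set X := \sum_j _; set L := \sum_j `|b i j - b k j|.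
set K := \sum_j b i j * (ln (b i j) - ln (b k j)).
have pinsker_ik : L ^+ 2 / 2 <= K.
  apply: pinsker => // j.
  - exact: lt_le_trans (bi_ge j).
  - exact: lt_le_trans (bk_ge j).
have K_le_sX : K <= s * X.
  rewrite mulr_sumr; apply: ler_sum => j _; rewrite mulrA bEi.
  exact: max_mul_ln_ratio_le.
have X_ge0 : 0 <= X.
  rewrite -(pmulr_rge0 _ s0); apply: le_trans K_le_sX; apply: le_trans pinsker_ik.
  by rewrite divr_ge0 ?sqr_ge0.
have K_le_X : K <= X by apply: le_trans K_le_sX _; rewrite ler_piMl.
have [/andP[mul_le_mui _] /andP[mul_le_muk _]] := (hmu i, hmu k).
have /andP[delta0 delta1] := hd; have /andP[eps0 eps_lt] := he.
have vbar_far : (1 - eps) * delta - 2 * eps <= \sum_j `|vbar v i j - vbar v k j|.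
  apply: (typical_vbar_l1_ge (mu := mu)) => //; try lra.
  by move=> a j; case/andP: (hv a j).
have L_ge : 18 / 25 * delta <= L.
  have := le_trans vbar_far (l1_triangle _ (b i) _).
  have := l1_triangle (b i) (b k) (vbar v k).
  rewrite -/L (eq_bigr _ (fun j _ => distrC (vbar v i j) (b i j))).
  have : eps * delta <= eps by rewrite ler_piMr ?ltW.
  rewrite /prd_l in near_i near_k; lra.
have : (18 / 25 * delta) ^+ 2 <= L ^+ 2 by rewrite ler_sqr ?nnegrE; lra.
have : (18 / 25 * delta) ^+ 2 = 324 / 625 * delta ^+ 2 by field.
lra.
Qed.

Theorem mainTheorem4 (R : realType) (n m : nat) (mu : 'I_n -> R) (mul delta eps : R)
  (v : 'I_n -> 'I_m -> R) (b : 'I_n -> 'I_m -> R) :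
  (0 < m)%N ->
  0 < mul ->
  (forall i, mul <= mu i <= 1) ->
  0 < delta < 1 ->
  0 < eps < delta / 25 ->
  (forall i j, 0 <= v i j <= 1) ->
  typical mu delta eps v ->
  PRD_bids delta mul v b ->
  forall i k : 'I_n, i != k ->
    let fEM := \sum_(j < m) vbar v i j * (prd_x delta mul b i j - prd_x delta mul b k j) in
    fEM = 1 / (n%:R * prd_C delta mul)
            * \sum_(j < m) vbar v i j * (ln (b i j) - ln (b k j))
    /\ delta ^+ 2 / (4 * n%:R * prd_C delta mul) <= fEM.
Proof.
move=> m0 mul0 hmu hd he hv typ bids i k ik fEM.
have fEM_eq : fEM = 1 / (n%:R * prd_C delta mul)
    * \sum_(j < m) vbar v i j * (ln (b i j) - ln (b k j)).
  by rewrite /fEM mulr_sumr; apply: eq_bigr => j _; rewrite prd_x_sub; ring.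
split => //; rewrite fEM_eq.
have n_pos : 0 < n%:R :> R by rewrite ltr0n; apply: leq_ltn_trans (ltn_ord i).
have C_pos : 0 < prd_C delta mul.
  by apply: prd_C_gt0 => //; rewrite mul0; case/andP: (hmu i) => /le_trans; apply.
have nC_pos : 0 < n%:R * prd_C delta mul by rewrite mulr_gt0.
have -> : delta ^+ 2 / (4 * n%:R * prd_C delta mul)
    = 1 / (n%:R * prd_C delta mul) * (delta ^+ 2 / 4).
  by field; rewrite !gt_eqF.
rewrite ler_pM2l ?divr_gt0 //.
exact: (log_bid_ratio_ge m0 mul0 hmu hd he hv typ bids ik).
Qed.
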